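(* Let $X$ be a Polish space with a fixed compatible metric $d$, $h:X\to\mathbb R$, and let $\alpha,\xi,\zeta$ be countable ordinals. If $P$ is a closed set in $X$ having property $(\xi,\zeta)$ with respect to $h$, then $D^\alpha(h,1,P)$ has property $(\xi,\zeta+\alpha)$ with respect to $h$.
   Context: $B(x,\varepsilon)$ is the open $d$-ball. $D$-derivation: for $f$ defined on a closed set containing $F$, $\varepsilon>0$, closed $F$: $D^0(f,\varepsilon,F)=F$, $D^1(f,\varepsilon,F)$ = set of $x\in F$ such that every neighbourhood $U$ of $x$ contains $x_1,x_2\in F\cap U$ with $|f(x_1)-f(x_2)|\ge\varepsilon$, $D^{\alpha+1}=D^1(f,\varepsilon,D^\alpha(f,\varepsilon,F))$, intersections at limits. A closed set $P$ has property $(\xi,\zeta)$ with respect to $h$ if for every $x\in P$ and every $\varepsilon>0$ there are a closed set $Q\subseteq B(x,\varepsilon)$ and a function $g:Q\to\mathbb N$ such that $g=1$ on $D^\xi(g,1,Q)\cup\{x\}$ and $x\in D^\zeta(gh,1,Q)$. *)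

From Stdlib Require Import Reals.
Open Scope R_scope.



Definition is_metric {X : Type} (d : X -> X -> R) : Prop :=
  (forall x y, 0 <= d x y) /\
  (forall x y, d x y = 0 <-> x = y) /\
  (forall x y, d x y = d y x) /\
  (forall x y z, d x z <= d x y + d y z).

Definition cauchy_seq {X : Type} (d : X -> X -> R) (u : nat -> X) : Prop :=
  forall eps, eps > 0 -> exists N, forall m n, (N <= m)%nat -> (N <= n)%nat ->
    d (u m) (u n) < eps.

Definition converges_to {X : Type} (d : X -> X -> R) (u : nat -> X) (l : X) : Prop :=
  forall eps, eps > 0 -> exists N, forall n, (N <= n)%nat -> d (u n) l < eps.

Definition complete_metric {X : Type} (d : X -> X -> R) : Prop :=
  forall u, cauchy_seq d u -> exists l, converges_to d u l.

Definition separable_metric {X : Type} (d : X -> X -> R) : Prop :=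
  exists C : X -> Prop,
    (exists e : X -> nat, forall x y, C x -> C y -> e x = e y -> x = y) /\
    (forall x eps, eps > 0 -> exists c, C c /\ d x c < eps).

Definition polish_metric {X : Type} (d : X -> X -> R) : Prop :=
  is_metric d /\ complete_metric d /\ separable_metric d.

Definition ball {X : Type} (d : X -> X -> R) (x : X) (eps : R) : X -> Prop :=
  fun y => d x y < eps.

Definition nbhd {X : Type} (d : X -> X -> R) (x : X) (U : X -> Prop) : Prop :=
  exists delta, delta > 0 /\ forall y, ball d x delta y -> U y.

Definition mclosed {X : Type} (d : X -> X -> R) (F : X -> Prop) : Prop :=
  forall x, (forall delta, delta > 0 -> exists y, F y /\ d x y < delta) -> F x.

(** Countable ordinals, represented as Brouwer trees
    (zero, successor, supremum of an omega-sequence). *)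
Inductive ord : Type :=
| OZ : ord
| OS : ord -> ord
| OL : (nat -> ord) -> ord.

Fixpoint oadd (a b : ord) : ord :=
  match b with
  | OZ => a
  | OS b' => OS (oadd a b')
  | OL f => OL (fun n => oadd a (f n))
  end.

(** One step of the D-derivation. Functions are total on X; only their
    values on F matter. *)
Definition D1 {X : Type} (d : X -> X -> R) (f : X -> R) (eps : R)
    (F : X -> Prop) : X -> Prop :=
  fun x => F x /\
    forall U, nbhd d x U ->
      exists x1 x2, F x1 /\ U x1 /\ F x2 /\ U x2 /\ Rabs (f x1 - f x2) >= eps.

Fixpoint Dalpha {X : Type} (d : X -> X -> R) (f : X -> R) (eps : R)
    (F : X -> Prop) (a : ord) : X -> Prop :=
  match a with
  | OZ => F
  | OS b => D1 d f eps (Dalpha d f eps F b)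
  | OL g => fun x => forall n, Dalpha d f eps F (g n) x
  end.

(** Property (xi,zeta) with respect to h. g : Q -> N is modelled by a
    total g : X -> nat; gh is the pointwise product. *)
Definition has_property {X : Type} (d : X -> X -> R) (h : X -> R)
    (P : X -> Prop) (xi zeta : ord) : Prop :=
  forall x, P x -> forall eps, eps > 0 ->
    exists (Q : X -> Prop) (g : X -> nat),
      mclosed d Q /\
      (forall y, Q y -> ball d x eps y) /\
      (forall y, Dalpha d (fun z => INR (g z)) 1 Q xi y \/ y = x -> g y = 1%nat) /\
      Dalpha d (fun z => INR (g z) * h z) 1 Q zeta x.

(* Induction on [alpha], where only the successors [OS beta] reached from [alpha] through
   fundamental sequences matter, since [D^(zeta+alpha)] is the intersection of [D^zeta] and
   the [D^(zeta+beta+1)] for those [beta].  Given [x] in [D^alpha(h,1,P)], enumerate these [beta]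
   in a sequence where each recurs infinitely often.  At stage [k], inside a radius
   [rho_k -> 0], pick [p, q] in [D^beta(h,1,P)] with [|h p - h q| >= 1] and, by the induction
   hypothesis, witnesses for property [(xi, zeta+beta)] at them, small enough to lie in an
   annulus around [x] and far from each other.  The union [Q] of [{x}] and all these pieces
   is closed, each piece is relatively open in [Q], so derivatives computed in a piece agree
   with those in [Q]; gluing the functions gives [g] with [x] in [D^(zeta+beta+1)(gh,1,Q)]
   for every recurring [beta]. *)

From Stdlib Require Import Reals Lra Lia Classical ClassicalEpsilon.
From Stdlib Require Cantor.
Open Scope R_scope.

Section Metric.
Variables (X : Type) (d : X -> X -> R).
Hypothesis Hm : is_metric d.

Lemma dist_self x : d x x = 0.
Proof. destruct Hm as (_ & Hzero & _). exact (proj2 (Hzero x x) eq_refl). Qed.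

Lemma dist_sym x y : d x y = d y x.
Proof. destruct Hm as (_ & _ & Hsym & _). apply Hsym. Qed.

Lemma dist_tri x y z : d x z <= d x y + d y z.
Proof. destruct Hm as (_ & _ & _ & Htri). apply Htri. Qed.

Lemma dist_pos x y : x <> y -> 0 < d x y.
Proof.
  destruct Hm as (Hnn & Hzero & _). intros Hxy.
  destruct (Hnn x y) as [Hlt | Heq]; [exact Hlt|].
  exfalso. apply Hxy, Hzero. now symmetry.
Qed.

End Metric.

Section Ordinals.

Inductive lim_reach : ord -> ord -> Prop :=
| lim_reach_refl a : lim_reach a a
| lim_reach_OL f n a : lim_reach a (f n) -> lim_reach a (OL f).

Lemma ord_lim_reach_ind (P : ord -> Prop) :
  (forall a, (forall b, lim_reach (OS b) a -> P b) -> P a) -> forall a, P a.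
Proof.
  intros step a.
  enough (H : P a /\ forall b, lim_reach (OS b) a -> P b) by exact (proj1 H).
  induction a as [|a IH|f IH].
  - assert (Hsucc : forall b, lim_reach (OS b) OZ -> P b) by (intros b Hb; inversion Hb).
    split; [apply step|]; exact Hsucc.
  - assert (Hsucc : forall b, lim_reach (OS b) (OS a) -> P b)
      by (intros b Hb; inversion Hb; subst; exact (proj1 IH)).
    split; [apply step|]; exact Hsucc.
  - assert (Hsucc : forall b, lim_reach (OS b) (OL f) -> P b)
      by (intros b Hb; inversion Hb; subst; eapply IH; eassumption).
    split; [apply step|]; exact Hsucc.
Qed.

Definition enumerable {A : Type} (S : A -> Prop) : Prop :=
  exists e : nat -> option A,
    (forall n a, e n = Some a -> S a) /\ (forall a, S a -> exists n, e n = Some a).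

Lemma enumerable_union {A : Type} (S : nat -> A -> Prop) :
  (forall n, enumerable (S n)) -> enumerable (fun a => exists n, S n a).
Proof.
  intros HS. destruct (choice _ HS) as [e He].
  exists (fun k => let (n, m) := Cantor.of_nat k in e n m). split.
  - intros k a Hk. destruct (Cantor.of_nat k) as [n m].
    exists n. exact (proj1 (He n) m a Hk).
  - intros a [n Ha]. destruct (proj2 (He n) a Ha) as [m Hm].
    exists (Cantor.to_nat (n, m)). now rewrite Cantor.cancel_of_to.
Qed.

Lemma succ_reach_enumerable a : enumerable (fun b => lim_reach (OS b) a).
Proof.
  induction a as [|a _|f IH].
  - exists (fun _ => None). split; [discriminate|]. intros b Hb. inversion Hb.
  - exists (fun _ => Some a). split.
    + intros _ b [= <-]. constructor.
    + intros b Hb. exists 0%nat. inversion Hb. reflexivity.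
  - destruct (enumerable_union _ IH) as [e [He1 He2]].
    exists e. split.
    + intros n b Hn. destruct (He1 n b Hn) as [m Hm]. econstructor. exact Hm.
    + intros b Hb. apply He2. inversion Hb. eauto.
Qed.

Lemma recurrent_sequence {A : Type} (S : A -> Prop) (a0 : A) :
  enumerable S -> S a0 ->
  exists B : nat -> A, (forall k, S (B k)) /\
    forall a, S a -> forall K, exists k, (K <= k)%nat /\ B k = a.
Proof.
  intros [e [He1 He2]] Ha0.
  exists (fun k => match e (fst (Cantor.of_nat k)) with Some a => a | None => a0 end).
  split.
  - intro k. destruct (e _) eqn:Ek; eauto.
  - intros a Ha K. destruct (He2 a Ha) as [n Hn].
    exists (Cantor.to_nat (n, K)). rewrite Cantor.cancel_of_to. simpl. rewrite Hn.
    split; [|reflexivity]. pose proof (Cantor.to_nat_non_decreasing n K). lia.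
Qed.

End Ordinals.

Section Derivation.
Variables (X : Type) (d : X -> X -> R).

Lemma Dalpha_sub f e F a x : Dalpha d f e F a x -> F x.
Proof.
  revert x. induction a as [|a IH|g IH]; simpl; intros x Hx.
  - exact Hx.
  - exact (IH x (proj1 Hx)).
  - exact (IH 0%nat x (Hx 0%nat)).
Qed.

Lemma Dalpha_mono f e (F G : X -> Prop) a x :
  (forall z, F z -> G z) -> Dalpha d f e F a x -> Dalpha d f e G a x.
Proof.
  intros HFG. revert x. induction a as [|a IH|g IH]; simpl; intros x Hx.
  - auto.
  - destruct Hx as [Hx HU]. split; [auto|].
    intros U Hnb. destruct (HU U Hnb) as (x1 & x2 & H1 & U1 & H2 & U2 & Hjump).
    exists x1, x2. auto 7.
  - intro n. apply IH, Hx.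
Qed.

Lemma Dalpha_ext f f' e F a x :
  (forall z, F z -> f z = f' z) -> Dalpha d f e F a x -> Dalpha d f' e F a x.
Proof.
  intros Hff'. revert x. induction a as [|a IH|g IH]; simpl; intros x Hx.
  - auto.
  - destruct Hx as [Hx HU]. split; [auto|].
    intros U Hnb. destruct (HU U Hnb) as (x1 & x2 & H1 & U1 & H2 & U2 & Hjump).
    exists x1, x2. rewrite <- !Hff' by (eapply Dalpha_sub; eassumption). auto 7.
  - intro n. apply IH, Hx.
Qed.

Lemma Dalpha_oadd_sub f e F zeta b x :
  Dalpha d f e F (oadd zeta b) x -> Dalpha d f e F zeta x.
Proof.
  revert x. induction b as [|b IH|g IH]; simpl; intros x Hx.
  - exact Hx.
  - exact (IH x (proj1 Hx)).
  - exact (IH 0%nat x (Hx 0%nat)).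
Qed.

Lemma Dalpha_lim_reach f e F a b x :
  lim_reach a b -> Dalpha d f e F b x -> Dalpha d f e F a x.
Proof. induction 1; simpl; auto. Qed.

Lemma Dalpha_oadd_of_succ f e F zeta alpha x :
  Dalpha d f e F zeta x ->
  (forall b, lim_reach (OS b) alpha -> Dalpha d f e F (oadd zeta (OS b)) x) ->
  Dalpha d f e F (oadd zeta alpha) x.
Proof.
  intros Hzeta. induction alpha as [|a _|g IH]; intros Hsucc.
  - exact Hzeta.
  - apply Hsucc. constructor.
  - intro n. apply IH. intros b Hb. apply Hsucc. econstructor. exact Hb.
Qed.

Lemma Dalpha_local f e (F A : X -> Prop) a y :
  (forall z, A z -> F z) ->
  (forall z, A z -> exists delta, delta > 0 /\ forall w, F w -> d z w < delta -> A w) ->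
  A y -> Dalpha d f e F a y -> Dalpha d f e A a y.
Proof.
  intros HAF Hopen. revert y. induction a as [|a IH|g IH]; simpl; intros y Ay Hy.
  - exact Ay.
  - destruct Hy as [Hy HU]. split; [auto|].
    intros U [delta [Hdelta HUd]].
    destruct (Hopen y Ay) as [de [Hde HA]].
    destruct (HU (fun z => U z /\ d y z < de))
      as (x1 & x2 & H1 & [U1 D1] & H2 & [U2 D2] & Hjump).
    { exists (Rmin delta de). split; [now apply Rmin_glb_lt|].
      intros z Hz. unfold ball in Hz.
      pose proof (Rmin_l delta de). pose proof (Rmin_r delta de).
      split; [apply HUd; unfold ball|]; lra. }
    assert (A1 : A x1) by (apply HA; [eapply Dalpha_sub; eassumption | exact D1]).
    assert (A2 : A x2) by (apply HA; [eapply Dalpha_sub; eassumption | exact D2]).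
    exists x1, x2. auto 7.
  - intro n. apply IH; auto.
Qed.

Hypothesis Hm : is_metric d.

Lemma Dalpha_closed f e F a : mclosed d F -> mclosed d (Dalpha d f e F a).
Proof.
  intros HF. induction a as [|a IH|g IH]; simpl; intros y Hy.
  - exact (HF y Hy).
  - split.
    + apply IH. intros de Hde. destruct (Hy de Hde) as [z [[Hz _] Hyz]]. eauto.
    + intros U [de [Hde HU]].
      destruct (Hy de Hde) as [z [[_ Hz] Hyz]].
      apply Hz. exists (de - d y z). split; [lra|].
      intros w Hw. apply HU. unfold ball in *.
      pose proof (dist_tri X d Hm y z w). lra.
  - intro n. apply IH. intros de Hde. destruct (Hy de Hde) as [z [Hz Hyz]]. eauto.
Qed.

End Derivation.

Lemma halving_sequence {A : Type} (a0 : A) (Step : nat -> R -> A -> Prop) (rad : A -> R)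
  (eps : R) :
  0 < eps ->
  (forall k r, 0 < r -> exists a, Step k r a /\ 0 < rad a <= r / 2) ->
  exists (rho : nat -> R) (L : nat -> A),
    rho 0%nat = eps /\ forall k, Step k (rho k) (L k) /\ rho (S k) = rad (L k).
Proof.
  intros Heps Hstep.
  set (Good k r a := 0 < r -> Step k r a /\ 0 < rad a <= r / 2).
  set (choose k r := epsilon (inhabits a0) (Good k r)).
  assert (Hchoose : forall k r, Good k r (choose k r)).
  { intros k r. apply epsilon_spec.
    destruct (Rlt_dec 0 r) as [Hr | Hr].
    - destruct (Hstep k r Hr) as [a Ha]. now exists a.
    - exists a0. intro. contradiction. }
  set (rho := fix rho k := match k with O => eps | S k => rad (choose k (rho k)) end).
  assert (Hpos : forall k, 0 < rho k).
  { induction k as [|k IH]; [exact Heps|]. apply (Hchoose k (rho k) IH). }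
  exists rho, (fun k => choose k (rho k)). split; [reflexivity|].
  intro k. split; [apply (Hchoose k (rho k) (Hpos k)) | reflexivity].
Qed.

Section Gluing.
Variables (X : Type) (d : X -> X -> R).
Hypothesis Hm : is_metric d.
Variables (I : Type) (x : X) (piece : I -> X -> Prop) (r : I -> R).
Hypothesis r_pos : forall i, 0 < r i.
Hypothesis piece_closed : forall i, mclosed d (piece i).
Hypothesis piece_off_center : forall i z, piece i z -> z <> x.
Hypothesis piece_sep : forall i j z w, i <> j -> piece i z -> piece j w -> r i <= d z w.
Hypothesis piece_decay :
  forall t, 0 < t -> exists c, 0 < c /\ forall i z, piece i z -> t <= d x z -> c <= r i.

Definition glued (z : X) : Prop := z = x \/ exists i, piece i z.

Lemma piece_unique i j z : piece i z -> piece j z -> i = j.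
Proof.
  intros Hi Hj. apply NNPP. intros Hij.
  pose proof (piece_sep i j z z Hij Hi Hj). pose proof (r_pos i).
  rewrite dist_self in * by exact Hm. lra.
Qed.

Lemma piece_rel_open i y :
  piece i y -> exists delta, delta > 0 /\ forall w, glued w -> d y w < delta -> piece i w.
Proof.
  intros Hy. pose proof (dist_pos X d Hm x y (not_eq_sym (piece_off_center i y Hy))).
  pose proof (r_pos i). pose proof (Rmin_l (d x y) (r i)). pose proof (Rmin_r (d x y) (r i)).
  exists (Rmin (d x y) (r i)). split; [now apply Rmin_glb_lt|].
  intros w [-> | [j Hw]] Hyw.
  - rewrite dist_sym in Hyw by exact Hm. lra.
  - destruct (classic (i = j)) as [<- | Hij]; [exact Hw|].
    pose proof (piece_sep i j y w Hij Hy Hw). lra.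
Qed.

(* Near a point [z <> x], [glued] only meets pieces of radius at least [c], and
   two such pieces are [c] apart: [z] is a limit of a single closed piece. *)
Lemma glued_closed : mclosed d glued.
Proof.
  intros z Hz. destruct (classic (z = x)) as [Ezx | Ezx]; [now left | right].
  pose proof (dist_pos X d Hm x z (not_eq_sym Ezx)).
  destruct (piece_decay (d x z / 2)) as [c [Hc Hdecay]]; [lra|].
  assert (Hnear : forall y, glued y -> d z y < d x z / 2 -> exists i, piece i y /\ c <= r i).
  { intros y [-> | [i Hi]] Hzy.
    - rewrite dist_sym in Hzy by exact Hm. lra.
    - exists i. split; [exact Hi|]. apply (Hdecay i y Hi).
      pose proof (dist_tri X d Hm x y z). rewrite (dist_sym X d Hm y z) in *. lra. }
  pose proof (Rmin_l (d x z / 2) (c / 2)). pose proof (Rmin_r (d x z / 2) (c / 2)).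
  set (de := Rmin (d x z / 2) (c / 2)) in *.
  assert (Hde : 0 < de) by (apply Rmin_glb_lt; lra).
  destruct (Hz de Hde) as [y0 [Hy0 Hzy0]].
  destruct (Hnear y0 Hy0 ltac:(lra)) as [i [Hi Hci]].
  exists i. apply (piece_closed i). intros de' Hde'.
  destruct (Hz (Rmin de' de)) as [y [Hy Hzy]]; [now apply Rmin_glb_lt|].
  pose proof (Rmin_l de' de). pose proof (Rmin_r de' de).
  destruct (Hnear y Hy ltac:(lra)) as [j [Hj _]].
  exists y. split; [|lra].
  destruct (classic (i = j)) as [<- | Hij]; [exact Hj|].
  pose proof (piece_sep i j y0 y Hij Hi Hj). pose proof (dist_tri X d Hm y0 z y).
  rewrite (dist_sym X d Hm y0 z) in *. exfalso. lra.
Qed.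

Lemma glued_fun (gi : I -> X -> nat) :
  exists g : X -> nat, g x = 1%nat /\ forall i z, piece i z -> g z = gi i z.
Proof.
  assert (Hval : forall z, exists n, (z = x -> n = 1%nat) /\ forall i, piece i z -> n = gi i z).
  { intro z. destruct (classic (exists i, piece i z)) as [[i Hi] | Hno].
    - exists (gi i z). split.
      + intros ->. exfalso. exact (piece_off_center i x Hi eq_refl).
      + intros j Hj. now rewrite (piece_unique i j z Hi Hj).
    - exists 1%nat. split; [now intros _|]. intros i Hi. exfalso. eauto. }
  destruct (choice _ Hval) as [g Hg]. exists g. split.
  - exact (proj1 (Hg x) eq_refl).
  - intros i z Hi. exact (proj2 (Hg z) i Hi).
Qed.

Lemma Dalpha_glued_piece f e a i y :
  piece i y -> Dalpha d f e glued a y -> Dalpha d f e (piece i) a y.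
Proof.
  intros Hy. apply Dalpha_local; [| exact (piece_rel_open i) | exact Hy].
  intros z Hz. right. eauto.
Qed.

Lemma Dalpha_piece_glued f fi e a i y :
  (forall z, piece i z -> fi z = f z) -> Dalpha d fi e (piece i) a y -> Dalpha d f e glued a y.
Proof.
  intros Hf Hy. apply Dalpha_mono with (piece i); [intros z Hz; right; eauto|].
  exact (Dalpha_ext X d fi f e (piece i) a y Hf Hy).
Qed.

End Gluing.

Arguments glued {X I} x piece z.

Definition admissible {X : Type} (d : X -> X -> R) (xi : ord) (A : X -> Prop)
  (gA : X -> nat) : Prop :=
  mclosed d A /\ forall y, Dalpha d (fun z => INR (gA z)) 1 A xi y -> gA y = 1%nat.

Definition local_witness {X : Type} (d : X -> X -> R) (h : X -> R) (xi zeta : ord) (x : X)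
  (eps : R) (Q : X -> Prop) (g : X -> nat) : Prop :=
  mclosed d Q /\ (forall y, Q y -> ball d x eps y) /\
  (forall y, Dalpha d (fun z => INR (g z)) 1 Q xi y \/ y = x -> g y = 1%nat) /\
  Dalpha d (fun z => INR (g z) * h z) 1 Q zeta x.

Lemma local_witness_oadd {X : Type} (d : X -> X -> R) h xi zeta alpha (x : X) eps Q g :
  local_witness d h xi zeta x eps Q g ->
  (forall b, lim_reach (OS b) alpha ->
     Dalpha d (fun z => INR (g z) * h z) 1 Q (oadd zeta (OS b)) x) ->
  local_witness d h xi (oadd zeta alpha) x eps Q g.
Proof.
  intros (HQ & Hball & Hunit & Hzeta) Hsucc.
  repeat split; auto. now apply Dalpha_oadd_of_succ.
Qed.

(* A stage of the construction around [x]: two points with witness pieces; [lrad] is the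
   radius of the next stage. *)
Record level (X : Type) : Type := Level {
  lpt : bool -> X;
  lpiece : bool -> X -> Prop;
  lfun : bool -> X -> nat;
  lrad : R }.

Arguments Level {X}.
Arguments lpt {X}. Arguments lpiece {X}. Arguments lfun {X}. Arguments lrad {X}.

Record level_spec {X : Type} (d : X -> X -> R) (h : X -> R) (xi gamma : ord) (x : X)
  (rho : R) (L : level X) : Prop := {
  lpt_near : forall b, d x (lpt L b) < rho;
  lpt_jump : Rabs (h (lpt L true) - h (lpt L false)) >= 1;
  lpiece_admissible : forall b, admissible d xi (lpiece L b) (lfun L b);
  lpt_witness : forall b, lpt L b <> x ->
    lfun L b (lpt L b) = 1%nat /\
    Dalpha d (fun z => INR (lfun L b z) * h z) 1 (lpiece L b) gamma (lpt L b);
  lrad_pos : 0 < lrad L;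
  lrad_half : lrad L <= rho / 2;
  lpiece_annulus : forall b z, lpiece L b z -> 2 * lrad L <= d x z < rho;
  lpiece_apart : forall z w, lpiece L true z -> lpiece L false w -> lrad L <= d z w }.

Section Levels.
Variables (X : Type) (d : X -> X -> R) (h : X -> R) (xi zeta : ord) (x : X) (eps : R).
Hypothesis Hm : is_metric d.
Hypothesis Heps : 0 < eps.
Variables (B : nat -> ord) (rho : nat -> R) (L : nat -> level X).
Hypothesis rho_0 : rho 0%nat = eps.
Hypothesis rho_S : forall k, rho (S k) = lrad (L k).
Hypothesis L_spec : forall k, level_spec d h xi (oadd zeta (B k)) x (rho k) (L k).

Lemma rho_pos k : 0 < rho k.
Proof.
  destruct k as [|k]; [now rewrite rho_0|]. rewrite rho_S. apply (lrad_pos _ _ _ _ _ _ _ (L_spec k)).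
Qed.

Lemma rho_half k : rho (S k) <= rho k / 2.
Proof. rewrite rho_S. apply (lrad_half _ _ _ _ _ _ _ (L_spec k)). Qed.

Lemma rho_antitone k j : (k <= j)%nat -> rho j <= rho k.
Proof.
  induction 1 as [|j _ IH]; [lra|]. pose proof (rho_half j). pose proof (rho_pos j). lra.
Qed.

Lemma rho_vanish t : 0 < t -> exists K, rho K < t.
Proof.
  intros Ht.
  assert (Hgeom : forall k, rho k <= eps * (/ 2) ^ k).
  { induction k as [|k IH]; simpl; [rewrite rho_0; lra|].
    pose proof (rho_half k). lra. }
  destruct (pow_lt_1_zero (/ 2)) with (y := t / eps) as [K HK].
  { rewrite Rabs_pos_eq; lra. }
  { now apply Rdiv_lt_0_compat. }
  exists K. specialize (HK K (le_n K)). rewrite Rabs_pos_eq in HK by (apply pow_le; lra).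
  pose proof (Hgeom K). apply Rmult_lt_compat_l with (r := eps) in HK; [|exact Heps].
  replace (eps * (t / eps)) with t in HK by (field; lra). lra.
Qed.

Definition piece_of (i : nat * bool) : X -> Prop := lpiece (L (fst i)) (snd i).

Lemma piece_of_annulus k b z : piece_of (k, b) z -> 2 * rho (S k) <= d x z < rho k.
Proof. rewrite rho_S. apply (lpiece_annulus _ _ _ _ _ _ _ (L_spec k)). Qed.

Lemma piece_of_off_center i z : piece_of i z -> z <> x.
Proof.
  destruct i as [k b]. intros Hz ->. pose proof (piece_of_annulus k b x Hz).
  pose proof (rho_pos (S k)). rewrite dist_self in * by exact Hm. lra.
Qed.

Lemma piece_of_closed i : mclosed d (piece_of i).
Proof. apply (lpiece_admissible _ _ _ _ _ _ _ (L_spec (fst i))). Qed.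

Lemma piece_of_sep i j z w :
  i <> j -> piece_of i z -> piece_of j w -> rho (S (fst i)) <= d z w.
Proof.
  destruct i as [k b], j as [l c]; simpl. intros Hne Hz Hw.
  pose proof (piece_of_annulus k b z Hz). pose proof (piece_of_annulus l c w Hw).
  pose proof (dist_tri X d Hm x z w). pose proof (dist_tri X d Hm x w z).
  rewrite (dist_sym X d Hm w z) in *.
  destruct (Compare_dec.lt_eq_lt_dec k l) as [[Hkl | <-] | Hlk].
  - pose proof (rho_antitone (S k) l Hkl). lra.
  - rewrite rho_S. destruct b, c; try congruence; unfold piece_of in *; simpl in *.
    + exact (lpiece_apart _ _ _ _ _ _ _ (L_spec k) z w Hz Hw).
    + rewrite (dist_sym X d Hm). exact (lpiece_apart _ _ _ _ _ _ _ (L_spec k) w z Hw Hz).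
  - pose proof (rho_antitone (S l) k Hlk). pose proof (rho_antitone (S l) (S k) ltac:(lia)). lra.
Qed.

Lemma piece_of_decay t : 0 < t ->
  exists c, 0 < c /\ forall i z, piece_of i z -> t <= d x z -> c <= rho (S (fst i)).
Proof.
  intros Ht. destruct (rho_vanish t Ht) as [K HK].
  exists (rho K). split; [apply rho_pos|].
  intros [k b] z Hz Htz. simpl. pose proof (piece_of_annulus k b z Hz).
  apply rho_antitone. destruct (Compare_dec.le_lt_dec K k) as [HKk | HkK]; [|exact HkK].
  pose proof (rho_antitone K k HKk). lra.
Qed.

Lemma level_off_center k : exists b, lpt (L k) b <> x.
Proof.
  destruct (classic (lpt (L k) true = x)) as [Et | Et]; [|eauto].
  destruct (classic (lpt (L k) false = x)) as [Ef | Ef]; [|eauto].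
  pose proof (lpt_jump _ _ _ _ _ _ _ (L_spec k)) as Hjump.
  rewrite Et, Ef, Rminus_diag, Rabs_R0 in Hjump. lra.
Qed.

Lemma glued_levels_closed : mclosed d (glued x piece_of).
Proof.
  exact (glued_closed X d Hm _ x piece_of (fun i => rho (S (fst i)))
           piece_of_closed piece_of_sep piece_of_decay).
Qed.

Lemma glued_levels_in_ball y : glued x piece_of y -> ball d x eps y.
Proof.
  unfold ball. intros [-> | [[k b] Hy]].
  - rewrite dist_self by exact Hm. exact Heps.
  - pose proof (piece_of_annulus k b y Hy). pose proof (rho_antitone 0 k (Nat.le_0_l k)).
    rewrite rho_0 in *. lra.
Qed.

Section Glued.
Variable g : X -> nat.
Hypothesis g_center : g x = 1%nat.
Hypothesis g_pieces : forall i z, piece_of i z -> g z = lfun (L (fst i)) (snd i) z.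

Lemma glued_levels_unit y :
  Dalpha d (fun z => INR (g z)) 1 (glued x piece_of) xi y \/ y = x -> g y = 1%nat.
Proof.
  intros [Hy | ->]; [|exact g_center].
  destruct (Dalpha_sub _ _ _ _ _ _ _ Hy) as [-> | [i Hi]]; [exact g_center|].
  rewrite (g_pieces i y Hi). apply (lpiece_admissible _ _ _ _ _ _ _ (L_spec (fst i)) (snd i)).
  apply (Dalpha_ext X d (fun z => INR (g z))).
  { intros z Hz. now rewrite (g_pieces i z Hz). }
  exact (Dalpha_glued_piece X d Hm _ x piece_of (fun i => rho (S (fst i)))
           (fun i => rho_pos (S (fst i))) piece_of_off_center piece_of_sep _ _ _ i y Hi Hy).
Qed.

Lemma lpt_in_glued k b :
  lpt (L k) b <> x ->
  g (lpt (L k) b) = 1%nat /\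
  Dalpha d (fun z => INR (g z) * h z) 1 (glued x piece_of) (oadd zeta (B k)) (lpt (L k) b).
Proof.
  intros Hne. destruct (lpt_witness _ _ _ _ _ _ _ (L_spec k) b Hne) as [Hone HD].
  assert (Hin : piece_of (k, b) (lpt (L k) b)) by exact (Dalpha_sub _ _ _ _ _ _ _ HD).
  split; [rewrite (g_pieces (k, b) _ Hin); exact Hone|].
  apply (Dalpha_piece_glued X d _ x piece_of _ (fun z => INR (lfun (L k) b z) * h z) 1 _ (k, b));
    [|exact HD].
  intros z Hz. simpl. now rewrite (g_pieces (k, b) z Hz).
Qed.

Lemma center_in_closure gamma :
  (forall K, exists k, (K <= k)%nat /\ forall b, lpt (L k) b <> x ->
     Dalpha d (fun z => INR (g z) * h z) 1 (glued x piece_of) gamma (lpt (L k) b)) ->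
  Dalpha d (fun z => INR (g z) * h z) 1 (glued x piece_of) gamma x.
Proof.
  intros Hlev. apply (Dalpha_closed X d Hm _ _ _ _ glued_levels_closed). intros de Hde.
  destruct (rho_vanish de Hde) as [K HK]. destruct (Hlev K) as [k [HKk Hk]].
  destruct (level_off_center k) as [b Hb]. exists (lpt (L k) b). split; [exact (Hk b Hb)|].
  pose proof (lpt_near _ _ _ _ _ _ _ (L_spec k) b). pose proof (rho_antitone K k HKk). lra.
Qed.

Lemma center_in_D_zeta : Dalpha d (fun z => INR (g z) * h z) 1 (glued x piece_of) zeta x.
Proof.
  apply center_in_closure. intros K. exists K. split; [lia|].
  intros b Hb. eapply Dalpha_oadd_sub. apply (lpt_in_glued K b Hb).
Qed.

(* Levels with [B k = beta] come arbitrarily close to [x], and each supplies two points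
   of [D^(zeta+beta)] where [g] is 1 and [h] jumps by at least 1. *)
Lemma center_in_D_succ beta :
  (forall K, exists k, (K <= k)%nat /\ B k = beta) ->
  Dalpha d (fun z => INR (g z) * h z) 1 (glued x piece_of) (oadd zeta (OS beta)) x.
Proof.
  intros Hrec.
  assert (Hbeta : Dalpha d (fun z => INR (g z) * h z) 1 (glued x piece_of) (oadd zeta beta) x).
  { apply center_in_closure. intros K. destruct (Hrec K) as [k [HKk <-]].
    exists k. split; [exact HKk|]. intros b Hb. apply (lpt_in_glued k b Hb). }
  assert (Hpts : forall k b, B k = beta ->
    g (lpt (L k) b) = 1%nat /\
    Dalpha d (fun z => INR (g z) * h z) 1 (glued x piece_of) (oadd zeta beta) (lpt (L k) b)).
  { intros k b <-. destruct (classic (lpt (L k) b = x)) as [-> | Hne].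
    - split; [exact g_center | exact Hbeta].
    - exact (lpt_in_glued k b Hne). }
  split; [exact Hbeta|]. intros U [de [Hde HU]].
  destruct (rho_vanish de Hde) as [K HK]. destruct (Hrec K) as [k [HKk Hk]].
  destruct (Hpts k true Hk) as [Gt Dt]. destruct (Hpts k false Hk) as [Gf Df].
  pose proof (rho_antitone K k HKk).
  pose proof (lpt_near _ _ _ _ _ _ _ (L_spec k) true).
  pose proof (lpt_near _ _ _ _ _ _ _ (L_spec k) false).
  exists (lpt (L k) true), (lpt (L k) false).
  repeat split; [exact Dt | apply HU; unfold ball; lra | exact Df | apply HU; unfold ball; lra |].
  rewrite Gt, Gf. change (INR 1) with 1. rewrite !Rmult_1_l.
  exact (lpt_jump _ _ _ _ _ _ _ (L_spec k)).
Qed.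

End Glued.

Lemma levels_witness :
  exists Q g, local_witness d h xi zeta x eps Q g /\
    forall beta, (forall K, exists k, (K <= k)%nat /\ B k = beta) ->
      Dalpha d (fun z => INR (g z) * h z) 1 Q (oadd zeta (OS beta)) x.
Proof.
  destruct (glued_fun X d Hm _ x piece_of (fun i => rho (S (fst i)))
              (fun i => rho_pos (S (fst i))) piece_of_off_center piece_of_sep
              (fun i => lfun (L (fst i)) (snd i))) as [g [Hg1 Hg2]].
  exists (glued x piece_of), g. split; [split; [|split; [|split]]|].
  - exact glued_levels_closed.
  - exact glued_levels_in_ball.
  - exact (glued_levels_unit g Hg1 Hg2).
  - exact (center_in_D_zeta g Hg1 Hg2).
  - exact (center_in_D_succ g Hg1 Hg2).
Qed.

End Levels.

Lemma witness_from_levels {X : Type} (d : X -> X -> R) (h : X -> R) (xi zeta : ord) (x : X)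
  (eps : R) (B : nat -> ord) :
  is_metric d -> 0 < eps ->
  (forall k rho, 0 < rho -> exists L, level_spec d h xi (oadd zeta (B k)) x rho L) ->
  exists Q g, local_witness d h xi zeta x eps Q g /\
    forall beta, (forall K, exists k, (K <= k)%nat /\ B k = beta) ->
      Dalpha d (fun z => INR (g z) * h z) 1 Q (oadd zeta (OS beta)) x.
Proof.
  intros Hm Heps Hstep.
  destruct (halving_sequence (Level (fun _ => x) (fun _ _ => False) (fun _ _ => 0%nat) 0)
              (fun k rho L => level_spec d h xi (oadd zeta (B k)) x rho L) lrad eps Heps)
    as (rho & L & Hrho0 & HL).
  { intros k r Hr. destruct (Hstep k r Hr) as [L HL]. exists L.
    split; [exact HL | split; [exact (lrad_pos _ _ _ _ _ _ _ HL) | exact (lrad_half _ _ _ _ _ _ _ HL)]]. }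
  exact (levels_witness X d h xi zeta x eps Hm Heps B rho L Hrho0
           (fun k => proj2 (HL k)) (fun k => proj1 (HL k))).
Qed.

Section Step.
Variables (X : Type) (d : X -> X -> R) (h : X -> R) (xi zeta beta : ord) (P : X -> Prop) (x : X).
Hypothesis Hm : is_metric d.
Hypothesis IH : has_property d h (Dalpha d h 1 P beta) xi (oadd zeta beta).

(* At [y = x] the piece is empty; otherwise it is a witness of radius [c] at [y], kept
   at distance [2 s] from [x] by [c <= d x y / 2]. *)
Lemma piece_near y c :
  Dalpha d h 1 P beta y -> (y <> x -> 0 < c) -> c <= d x y / 2 ->
  exists A gA s, admissible d xi A gA /\
    (y <> x -> gA y = 1%nat /\ Dalpha d (fun z => INR (gA z) * h z) 1 A (oadd zeta beta) y) /\
    0 < s /\ forall z, A z -> d y z < c /\ 2 * s <= d x z.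
Proof.
  intros Hy Hc Hcy. destruct (classic (y = x)) as [-> | Hne].
  - exists (fun _ => False), (fun _ => 1%nat), 1.
    split; [split; [intros z Hz; now destruct (Hz 1 Rlt_0_1) as (? & [] & _) | reflexivity]|].
    split; [now intros []|]. split; [lra | now intros z []].
  - destruct (IH y Hy c (Hc Hne)) as (A & gA & HA & Hball & Hunit & HD).
    pose proof (dist_pos X d Hm x y (not_eq_sym Hne)).
    exists A, gA, (d x y / 4).
    split; [split; [exact HA | intros z Hz; apply Hunit; now left]|].
    split; [intros _; split; [apply Hunit; now right | exact HD]|].
    split; [lra|]. intros z Hz. specialize (Hball z Hz). unfold ball in Hball.
    pose proof (dist_tri X d Hm x z y). rewrite (dist_sym X d Hm z y) in *. split; lra.
Qed.

Lemma level_exists rho :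
  Dalpha d h 1 P (OS beta) x -> 0 < rho ->
  exists L, level_spec d h xi (oadd zeta beta) x rho L.
Proof.
  intros [_ Hjumps] Hrho.
  destruct (Hjumps (ball d x rho)) as (p & q & Hp & Hpx & Hq & Hqx & Hjump); [now exists rho|].
  unfold ball in Hpx, Hqx.
  assert (Hpq : 0 < d p q).
  { apply (dist_pos X d Hm). intros <-. rewrite Rminus_diag, Rabs_R0 in Hjump. lra. }
  set (c y := Rmin (d x y / 2) (Rmin (rho - d x y) (d p q / 3))).
  assert (Hc : forall y, d x y < rho ->
    (y <> x -> 0 < c y) /\ c y <= d x y / 2 /\ c y <= rho - d x y /\ c y <= d p q / 3).
  { intros y Hy. pose proof (Rmin_l (d x y / 2) (Rmin (rho - d x y) (d p q / 3))).
    pose proof (Rmin_r (d x y / 2) (Rmin (rho - d x y) (d p q / 3))).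
    pose proof (Rmin_l (rho - d x y) (d p q / 3)). pose proof (Rmin_r (rho - d x y) (d p q / 3)).
    unfold c. repeat split; try lra.
    intros Hne. pose proof (dist_pos X d Hm x y (not_eq_sym Hne)).
    repeat apply Rmin_glb_lt; lra. }
  destruct (Hc p Hpx) as (Hcp0 & Hcp1 & Hcp2 & Hcp3).
  destruct (Hc q Hqx) as (Hcq0 & Hcq1 & Hcq2 & Hcq3).
  destruct (piece_near p (c p) Hp Hcp0 Hcp1) as (A & gA & sp & HA & HpA & Hsp & HAz).
  destruct (piece_near q (c q) Hq Hcq0 Hcq1) as (B & gB & sq & HB & HqB & Hsq & HBz).
  clearbody c.
  pose proof (Rmin_l (rho / 2) (Rmin (d p q / 3) (Rmin sp sq))).
  pose proof (Rmin_r (rho / 2) (Rmin (d p q / 3) (Rmin sp sq))).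
  pose proof (Rmin_l (d p q / 3) (Rmin sp sq)). pose proof (Rmin_r (d p q / 3) (Rmin sp sq)).
  pose proof (Rmin_l sp sq). pose proof (Rmin_r sp sq).
  assert (Hr : 0 < Rmin (rho / 2) (Rmin (d p q / 3) (Rmin sp sq)))
    by (repeat apply Rmin_glb_lt; lra).
  set (r := Rmin (rho / 2) (Rmin (d p q / 3) (Rmin sp sq))) in *.
  clearbody r.
  exists (Level (fun b => if b then p else q) (fun b => if b then A else B)
                (fun b => if b then gA else gB) r).
  constructor; simpl; try (intros []); auto.
  - intros z Hz. destruct (HAz z Hz). pose proof (dist_tri X d Hm x p z). split; lra.
  - intros z Hz. destruct (HBz z Hz). pose proof (dist_tri X d Hm x q z). split; lra.
  - intros z w Hz Hw. destruct (HAz z Hz). destruct (HBz w Hw).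
    pose proof (dist_tri X d Hm p z q). pose proof (dist_tri X d Hm z w q).
    rewrite (dist_sym X d Hm w q) in *. lra.
Qed.

End Step.

Theorem proposition4p15 (X : Type) (d : X -> X -> R) (Hd : polish_metric d)
  (h : X -> R) (alpha xi zeta : ord) (P : X -> Prop)
  (HP : mclosed d P) (Hprop : has_property d h P xi zeta) :
  has_property d h (Dalpha d h 1 P alpha) xi (oadd zeta alpha).
Proof.
  destruct Hd as [Hm _].
  revert alpha. apply ord_lim_reach_ind. intros alpha IH x Hx eps Heps.
  destruct (classic (exists b, lim_reach (OS b) alpha)) as [[b0 Hb0] | Hnone].
  - destruct (recurrent_sequence _ b0 (succ_reach_enumerable alpha) Hb0) as [B [HB HBrec]].
    destruct (witness_from_levels d h xi zeta x eps B Hm Heps) as (Q & g & HQg & Hsucc).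
    { intros k rho Hrho. apply (level_exists X d h xi zeta (B k) P x Hm (IH (B k) (HB k)));
        [exact (Dalpha_lim_reach _ _ _ _ _ _ _ _ (HB k) Hx) | exact Hrho]. }
    exists Q, g. apply local_witness_oadd; [exact HQg|].
    intros b Hb. exact (Hsucc b (HBrec b Hb)).
  - destruct (Hprop x (Dalpha_sub _ _ _ _ _ _ _ Hx) eps Heps) as (Q & g & HQg).
    exists Q, g. apply local_witness_oadd; [exact HQg|].
    intros b Hb. exfalso. eauto.
Qed.
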